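(* Let $N$ be a perfect planar network in an annulus whose edge weights are given by flag coordinates as $w_e=x_v^ix_u^j$, and let $\{\cdot,\cdot\}_N$ be the Poisson bracket on the space of edge weights obtained as the pushforward of the universal bracket with parameters $\alpha_{ij},\beta_{ij}$. Then the gauge-invariant functions on the space of edge weights form a Poisson subalgebra, so that $\{\cdot,\cdot\}_N$ pushes forward under the projection $y:\mathcal E_N\to\mathcal F_N$ to a Poisson bracket $\{\cdot,\cdot\}_{\mathcal F_N}$ on the space $\mathcal F_N$ of face and trail weights; moreover, $\{\cdot,\cdot\}_{\mathcal F_N}$ depends on the six parameters $\alpha_{ij}$ and the six parameters $\beta_{ij}$ only through \[ \alpha=\alpha_{23}+\alpha_{13}-\alpha_{12},\qquad \beta=\beta_{23}+\beta_{13}-\beta_{12}, \] and is linear in $(\alpha,\beta)$.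
   Context: A perfect planar network in an annulus: a directed graph $G=(V,E)$ embedded in an annulus, with boundary vertices on the two boundary circles, each a source (one outgoing edge, no incoming) or a sink (one incoming edge, no outgoing); internal vertices have degree $3$ and are white (exactly one incoming edge) or black (exactly one outgoing edge); a cut and edge weights $w_e\in\mathbb R\setminus0$ as usual. A flag is a pair $(v,e)$ with $v$ an endpoint of $e$. To each internal vertex $v$ assign coordinates $x_v^1,x_v^2,x_v^3\in\mathbb R\setminus0$ labeling the three flags at $v$: $x_v^1$ labels the flag of the edge that is unique in its direction at $v$ (the incoming edge if $v$ is white, the outgoing edge if $v$ is black), and the flags labeled $x_v^1,x_v^2,x_v^3$ follow each other in clockwise order around $v$. Each boundary vertex $b_j$ gets one coordinate $x_j^1$ labeling its unique flag. Edge weights are $w_e=x_v^ix_u^j$, where $x_v^i,x_u^j$ label the two flags of $e$. The universal bracket is $\{x_v^i,x_v^j\}=\alpha_{ij}x_v^ix_v^j$ at white $v$, $\{x_v^i,x_v^j\}=\beta_{ij}x_v^ix_v^j$ at black $v$ ($i\ne j$, antisymmetric constants), all other brackets of coordinates zero; $\{\cdot,\cdot\}_N$ is its pushforward to the space $\mathcal E_N=(\mathbb R\setminus0)^{|E|}$ of edge weights. Gauge group: $\mathcal G=\mathrm{Hom}(\mathbb Z^{V_0},\mathbb R^* )$, $V_0$ the internal vertices, i.e. functions $\varphi:V\to\mathbb R^*$ with $\varphi(b)=1$ at boundary vertices, acting by $w_e\mapsto w_e\varphi(v)/\varphi(u)$ for $e=(u,v)$. $\mathcal F_N=\mathcal E_N/\mathcal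 G$ and $y:\mathcal E_N\to\mathcal F_N$ is the projection. The functions on $\mathcal F_N$ are generated by face weights $y_f=\prod_{e\in\partial f}w_e^{\pm1}$ (exponent $+1$ if the direction of $e$ agrees with the counterclockwise orientation of $\partial f$, $-1$ otherwise; $f$ a connected component of the complement of $G$ in the annulus) and, if some trail connects the two boundary circles, by the weight $y_t=\prod w(v_i,v_{i+1})$ of such a trail $t=(v_1,\dots,v_{k+1})$ (a sequence of vertices, consecutive ones joined by an edge in either direction, with boundary endpoints), where $w(v_i,v_{i+1})=w_e$ if $e=(v_i,v_{i+1})\in E$ and $w_e^{-1}$ if $e=(v_{i+1},v_i)\in E$. *)

From HB Require Import structures.
From mathcomp Require Import all_boot all_order all_algebra.
Set Implicit Arguments. Unset Strict Implicit. Unset Printing Implicit Defensive.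
Import Order.TTheory GRing.Theory Num.Theory.
Local Open Scope ring_scope.

Record network := Network {
  nV : finType;
  nE : finType;
  etail : nE -> nV;
  ehead : nE -> nV;
  isb : nV -> bool;
  white : nV -> bool;           (* colour of an internal vertex (true = white) *)
  circ : nV -> bool;            (* which boundary circle a boundary vertex lies on *)
  rot : (nE * bool)%type -> (nE * bool)%type;
      (* half-edge (= flag) (e,false) is the tail end, (e,true) the head end;
         rot h is the next flag clockwise around the vertex of h *)
  bnext : nV -> nV;
      (* next boundary vertex along the boundary circle, reached from the
         clockwise side of the boundary edge *)
  nF : finType;
  face : (nE * bool)%type -> nF
      (* side (e,true) = left side of e, (e,false) = right side of e;
         face s = the face containing that side *)
}.

Notation hedge N := (nE N * bool)%type.

Definition hv (N : network) (h : hedge N) : nV N :=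
  if h.2 then ehead h.1 else etail h.1.

(* the side of the edge of h lying clockwise (resp. counterclockwise) from h
   around hv h: for an outgoing edge the clockwise side is its right side,
   for an incoming edge its left side. *)
Definition cw_side (N : network) (h : hedge N) : hedge N := (h.1, h.2).
Definition ccw_side (N : network) (h : hedge N) : hedge N := (h.1, ~~ h.2).

Definition perfect_annular (N : network) : Prop :=
  (forall v : nV N, isb v -> #|[pred h : hedge N | hv h == v]| = 1%N) /\
  (forall v : nV N, ~~ isb v ->
     #|[pred h : hedge N | hv h == v]| = 3%N /\
     #|[pred h : hedge N | (hv h == v) && h.2]| = (if white v then 1 else 2)%N) /\
  (forall h : hedge N, ~~ isb (hv h) ->
     [/\ hv (rot h) = hv h, rot h != h, rot (rot h) != h
       & rot (rot (rot h)) = h]) /\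
  (* faces: the two sides meeting at a corner of an internal vertex lie in
     the same face *)
  (forall h : hedge N, ~~ isb (hv h) ->
     face (cw_side h) = face (ccw_side (rot h))) /\
  (forall b : nV N, isb b -> isb (bnext b) /\ circ (bnext b) = circ b) /\
  (forall b b' : nV N, isb b -> isb b' -> bnext b = bnext b' -> b = b') /\
  (forall b b' : nV N, isb b -> isb b' -> circ b = circ b' ->
     exists k, iter k (@bnext N) b = b') /\
  (* sides joined along a boundary arc lie in the same face *)
  (forall h h' : hedge N, isb (hv h) -> hv h' = bnext (hv h) ->
     face (cw_side h) = face (ccw_side h')) /\
  (forall f : nF N, exists s, face s = f).

Definition i0 : 'I_3 := @Ordinal 3 0 isT.
Definition i1 : 'I_3 := @Ordinal 3 1 isT.
Definition i2 : 'I_3 := @Ordinal 3 2 isT.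

(* the flag of the edge unique in its direction: incoming at white,
   outgoing at black *)
Definition special (N : network) (h : hedge N) : bool := h.2 == white (hv h).

(* label k (as 'I_3, i.e. 0,1,2 for x^1,x^2,x^3): x^1 on the special flag,
   then clockwise x^2, x^3 *)
Definition lab (N : network) (h : hedge N) : 'I_3 :=
  if special h then i0 else if special (rot (rot h)) then i1 else i2.

Definition antisym (R : realFieldType) (al : 'I_3 -> 'I_3 -> R) : Prop :=
  forall i j, al i j = - al j i.

(* {x_h, x_h'} = univ_br al be h h' * x_h * x_h' *)
Definition univ_br (R : realFieldType) (N : network) (al be : 'I_3 -> 'I_3 -> R)
  (h h' : hedge N) : R :=
  if [&& hv h == hv h', ~~ isb (hv h) & h != h']
  then (if white (hv h) then al else be) (lab h) (lab h')
  else 0.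

(* log-canonical bracket of Laurent monomials in the flag coordinates:
   {x^m, x^n} = mon_br m n * x^m * x^n *)
Definition mon_br (R : realFieldType) (N : network) (al be : 'I_3 -> 'I_3 -> R)
  (m n : hedge N -> int) : R :=
  \sum_(h : hedge N) \sum_(h' : hedge N) (m h * n h')%:~R * univ_br al be h h'.

(* edge weight w_e = product of the two flag coordinates of e, so the edge
   monomial w^a equals the flag monomial x^(pull a) *)
Definition pull (N : network) (a : nE N -> int) : hedge N -> int := fun h => a h.1.

(* pushforward bracket {.,.}_N on edge-weight monomials:
   {w^a, w^b}_N = brN a b * w^a * w^b *)
Definition brN (R : realFieldType) (N : network) (al be : 'I_3 -> 'I_3 -> R)
  (a b : nE N -> int) : R := mon_br al be (pull a) (pull b).

Definition wmon (R : realFieldType) (N : network) (a : nE N -> int)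
  (w : nE N -> R) : R := \prod_(e : nE N) w e ^ a e.

Definition gauge (R : realFieldType) (N : network) (phi : nV N -> R)
  (w : nE N -> R) : nE N -> R :=
  fun e => w e * phi (ehead e) / phi (etail e).

Definition gauge_inv (R : realFieldType) (N : network)
  (Fn : (nE N -> R) -> R) : Prop :=
  forall (phi : nV N -> R) (w : nE N -> R),
    (forall v : nV N, phi v != 0) -> (forall v : nV N, isb v -> phi v = 1) ->
    (forall e, w e != 0) -> Fn (gauge phi w) = Fn w.

(* y_f = prod_e w_e^(fexp f e): +1 if f is on the left of e (direction agrees
   with the counterclockwise orientation of the boundary of f), -1 if on the
   right (both contributions if f is on both sides) *)
Definition fexp (N : network) (f : nF N) : nE N -> int :=
  fun e => ((face (e, true) == f) : nat)%:Z - ((face (e, false) == f) : nat)%:Z.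

(* a step of a trail: (e, true) traverses e along its direction, (e, false)
   against it *)
Definition stp_src (N : network) (s : hedge N) : nV N :=
  if s.2 then etail s.1 else ehead s.1.
Definition stp_dst (N : network) (s : hedge N) : nV N :=
  if s.2 then ehead s.1 else etail s.1.

Definition connecting_trail (N : network) (t : seq (hedge N)) : Prop :=
  match t with
  | [::] => False
  | s0 :: t' =>
      [/\ path (fun a b => stp_dst a == stp_src b) s0 t',
          isb (stp_src s0), isb (stp_dst (last s0 t'))
        & circ (stp_src s0) != circ (stp_dst (last s0 t'))]
  end.

Definition texp (N : network) (t : seq (hedge N)) : nE N -> int :=
  fun e => \sum_(s <- t | s.1 == e) (if s.2 then 1 else -1).

(* generators of the functions on F_N: face weights and connecting trail
   weights *)
Definition Fgen (N : network) (p : nE N -> int) : Prop :=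
  (exists f : nF N, p = fexp f) \/
  (exists t, connecting_trail t /\ p = texp t).

Definition agg (R : realFieldType) (al : 'I_3 -> 'I_3 -> R) : R :=
  al i1 i2 + al i0 i2 - al i0 i1.

(* The bracket of two edge monomials w^a, w^b is the constant
   brN a b times w^a w^b, so the gauge-invariant functions form a Poisson
   subalgebra as soon as the invariant monomials do; this is the first half.
   For the second half, call an exponent vector balanced at v if its
   divergence (incoming minus outgoing exponents) vanishes there.  Face
   weights are balanced at internal vertices because the face corners around
   v close up, and trail weights because their contributions telescope along
   the trail.  The universal bracket only couples flags at one vertex, so
   brN a b is a sum of local terms; at an internal vertex with flags labelled
   x^1, x^2, x^3 clockwise, balance reads a(e1) = a(e2) + a(e3), and the
   contraction of the antisymmetric form with two such vectors collapses to
   the 2x2 minor of a, b on the edges e2, e3 times the aggregate parameter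
   al_23 + al_13 - al_12 (or its black analogue).  Summing over white and
   black vertices yields the constants c1, c2. *)
From Pilot Require Import Defs.
From HB Require Import structures.
From mathcomp Require Import all_boot all_order all_algebra ring lra.
Import Order.TTheory GRing.Theory Num.Theory.
Set Implicit Arguments. Unset Strict Implicit. Unset Printing Implicit Defensive.
Local Open Scope ring_scope.

Local Notation next_flag := (@Defs.rot _).

Lemma sum_over_three (V : nmodType) (T : finType) (P : {pred T}) (x y z : T)
    (G : T -> V) :
  #|P| = 3%N -> uniq [:: x; y; z] -> {subset [:: x; y; z] <= P} ->
  \sum_(h in P) G h = G x + G y + G z.
Proof.
move=> cardP uniq_xyz sub_xyz.
have memP : [:: x; y; z] =i P.
  by apply/subset_cardP; [rewrite (card_uniqP uniq_xyz) cardP | apply/subsetP].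
by rewrite -(eq_bigl _ _ memP) -big_uniq // !big_cons big_nil /= addr0 addrA.
Qed.

Lemma sum_ord3 (V : nmodType) (G : 'I_3 -> V) :
  \sum_(i < 3) G i = G i0 + G i1 + G i2.
Proof. by rewrite -(sum_over_three (P := 'I_3)) ?card_ord. Qed.

Lemma ord3_ind (P : 'I_3 -> Prop) : P i0 -> P i1 -> P i2 -> forall i, P i.
Proof.
move=> P0 P1 P2 [[|[|[|//]]] lt_i3].
- by rewrite (_ : Ordinal _ = i0) //; apply: val_inj.
- by rewrite (_ : Ordinal _ = i1) //; apply: val_inj.
- by rewrite (_ : Ordinal _ = i2) //; apply: val_inj.
Qed.

Lemma antisym_diag (R : realFieldType) (c : 'I_3 -> 'I_3 -> R) (i : 'I_3) :
  antisym c -> c i i = 0.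
Proof. by move=> Ac; have := Ac i i; lra. Qed.

(* Contracting an antisymmetric 3x3 form against two vectors that obey the
   balance relation x0 = x1 + x2 leaves only the aggregate parameter agg c:
   this is where the six parameters of a vertex collapse to a single one. *)
Lemma balanced_contraction (R : realFieldType) (c : 'I_3 -> 'I_3 -> R)
    (x y : 'I_3 -> R) :
  antisym c -> x i0 = x i1 + x i2 -> y i0 = y i1 + y i2 ->
  \sum_(i < 3) \sum_(j < 3) x i * y j * c i j =
  (x i1 * y i2 - x i2 * y i1) * agg c.
Proof.
move=> Ac bal_x bal_y.
rewrite !sum_ord3 /agg !antisym_diag // (Ac i1 i0) (Ac i2 i0) (Ac i2 i1).
rewrite bal_x bal_y; ring.
Qed.

Definition flag_sign (N : network) (h : hedge N) : int := if h.2 then 1 else -1.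

(* The
   gauge transformation at v rescales w^p by phi(v)^(divergence p v). *)
Definition divergence (N : network) (p : nE N -> int) (v : nV N) : int :=
  \sum_(h : hedge N | hv h == v) p h.1 * flag_sign h.

Definition incidence (N : network) (e : nE N) (v : nV N) : int :=
  (ehead e == v : nat)%:Z - (etail e == v : nat)%:Z.

Lemma divergence_edgewise (N : network) (p : nE N -> int) (v : nV N) :
  divergence p v = \sum_(e : nE N) p e * incidence e v.
Proof.
rewrite /divergence big_mkcond /=.
transitivity (\sum_(e : nE N) \sum_(b : bool)
                (if hv (e, b) == v then p e * flag_sign (e, b) else 0)).
  by rewrite pair_bigA; apply: eq_bigr => -[].
apply: eq_bigr => e _; rewrite big_bool /= /hv /flag_sign /incidence /=.
by case: (ehead e == v); case: (etail e == v); rewrite /= ?addr0 ?add0r; ring.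
Qed.

Definition step_balance (N : network) (s : hedge N) (v : nV N) : int :=
  (stp_dst s == v : nat)%:Z - (stp_src s == v : nat)%:Z.

Lemma texp_cons (N : network) (s : hedge N) (t : seq (hedge N)) (e : nE N) :
  texp (s :: t) e = (if s.1 == e then flag_sign s else 0) + texp t e.
Proof. by rewrite /texp big_cons; case: ifP; rewrite ?add0r. Qed.

Lemma divergence_trail_cons (N : network) (s : hedge N) (t : seq (hedge N))
    (v : nV N) :
  divergence (texp (s :: t)) v = step_balance s v + divergence (texp t) v.
Proof.
rewrite !divergence_edgewise.
under eq_bigr => e _ do rewrite texp_cons mulrDl.
rewrite big_split /=; congr (_ + _).
rewrite (bigD1 s.1) //= eqxx big1 ?addr0 => [|e /negbTE ne]; last first.
  by rewrite eq_sym ne mul0r.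
case: s => e [];
  by rewrite /step_balance /stp_dst /stp_src /incidence /flag_sign /= ?mul1r ?mulN1r ?opprB.
Qed.

Lemma divergence_trail (N : network) (v : nV N) (s0 : hedge N)
    (t : seq (hedge N)) :
  path (fun a b => stp_dst a == stp_src b) s0 t ->
  divergence (texp (s0 :: t)) v =
  (stp_dst (last s0 t) == v : nat)%:Z - (stp_src s0 == v : nat)%:Z.
Proof.
elim: t s0 => [|s1 t IH] s0 /=.
  move=> _; rewrite divergence_trail_cons /step_balance.
  by rewrite /divergence big1 ?addr0 // => h _; rewrite /texp big_nil mul0r.
case/andP => /eqP dst_src trail.
rewrite divergence_trail_cons IH // /step_balance -dst_src; ring.
Qed.

Lemma trail_divergence_free (N : network) (t : seq (hedge N)) (v : nV N) :
  ~~ isb v -> connecting_trail t -> divergence (texp t) v = 0.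
Proof.
move=> internal_v; case: t => [|s0 t] //= [trail src_b dst_b _].
rewrite divergence_trail //.
have /negbTE -> : stp_dst (last s0 t) != v.
  by apply: contraNneq internal_v => <-.
have /negbTE -> : stp_src s0 != v by apply: contraNneq internal_v => <-.
by rewrite subrr.
Qed.

Lemma fexp_flag (N : network) (f : nF N) (h : hedge N) :
  fexp f h.1 * flag_sign h =
  (face (cw_side h) == f : nat)%:Z - (face (ccw_side h) == f : nat)%:Z.
Proof.
by case: h => e []; rewrite /fexp /flag_sign /cw_side /ccw_side /= ?mulr1 ?mulrN1 ?opprB.
Qed.

Section PerfectNetwork.
Variable N : network.
Hypothesis HN : perfect_annular N.

Definition special_flag (v : nV N) : option (hedge N) :=
  [pick h | (hv h == v) && special h].

Lemma special_flag_spec (v : nV N) : ~~ isb v ->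
  exists2 s0, special_flag v = Some s0 &
    forall h, ((hv h == v) && special h) = (h == s0).
Proof.
move=> internal_v; have [_ [/(_ v internal_v) [deg3 in_deg] _]] := HN.
have split_dir := cardID [pred h : hedge N | h.2] [pred h : hedge N | hv h == v].
have in_card : #|[predI [pred h : hedge N | hv h == v] & [pred h : hedge N | h.2]]|
               = #|[pred h : hedge N | (hv h == v) && h.2]| by apply: eq_card.
have one_special : #|[pred h : hedge N | (hv h == v) && special h]| = 1%N.
  have -> : #|[pred h : hedge N | (hv h == v) && special h]| =
      if white v then
        #|[predI [pred h : hedge N | hv h == v] & [pred h : hedge N | h.2]]|
      else #|[predD [pred h : hedge N | hv h == v] & [pred h : hedge N | h.2]]|.
    case: ifP => white_v; apply: eq_card => h; rewrite !inE /special;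
      by case: (hv h =P v) => [->|]; rewrite ?andbF ?white_v //=; case: h.2.
  move: split_dir; rewrite in_card in_deg deg3.
  by case: (white v) => // /(@addnI 2%N _ 1%N).
have [s0 mem_s0] := mem_card1 one_special.
exists s0 => [|h]; last by have := mem_s0 h; rewrite !inE.
rewrite /special_flag; case: pickP => [h spec_h|none].
  by have := mem_s0 h; rewrite !inE spec_h => /esym/eqP ->.
by move: (mem_s0 s0) (none s0); rewrite !inE eqxx => /= ->.
Qed.

Definition corner (s0 : hedge N) (i : 'I_3) : hedge N := iter i next_flag s0.

Lemma corner_frame (v : nV N) (s0 : hedge N) :
  ~~ isb v -> special_flag v = Some s0 ->
  [/\ forall i, hv (corner s0 i) = v,
      forall i, lab (corner s0 i) = i,
      next_flag (corner s0 i2) = s0 &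
      [/\ (corner s0 i0).2 = white v, (corner s0 i1).2 = ~~ white v
        & (corner s0 i2).2 = ~~ white v]].
Proof.
move=> internal_v some_s0.
have [s0' some_s0' spec] := special_flag_spec internal_v.
move: some_s0'; rewrite some_s0 => -[s0_eq]; subst s0'.
have [_ [_ [rotation _]]] := HN.
have /andP[/eqP hv_s0 special_s0] : (hv s0 == v) && special s0 by rewrite spec.
have internal0 : ~~ isb (hv s0) by rewrite hv_s0.
have [hv1 ne10 ne20 rot3] := rotation s0 internal0.
have internal1 : ~~ isb (hv (next_flag s0)) by rewrite hv1.
have [hv2 _ _ _] := rotation (next_flag s0) internal1.
have not_special h : hv h = v -> h != s0 -> special h = false.
  by move=> hv_h ne; apply/negbTE; apply: contra ne; rewrite -spec hv_h eqxx.
have hv_corner : forall i, hv (corner s0 i) = v.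
  by apply: ord3_ind; rewrite /= ?hv2 ?hv1.
have special1 : special (next_flag s0) = false.
  exact: not_special _ (hv_corner i1) ne10.
have special2 : special (next_flag (next_flag s0)) = false.
  exact: not_special _ (hv_corner i2) ne20.
split=> //.
- by apply: ord3_ind; rewrite /lab /= ?rot3 ?special_s0 ?special1 ?special2.
- move: special_s0 special1 special2; rewrite /special hv2 hv1 hv_s0 /=.
  by move=> /eqP ->; case: (white v); case: (next_flag s0).2; case: (next_flag _).2.
Qed.

Lemma sum_flags_at (V : nmodType) (G : hedge N -> V) (v : nV N) (s0 : hedge N) :
  ~~ isb v -> special_flag v = Some s0 ->
  \sum_(h | hv h == v) G h = \sum_(i < 3) G (corner s0 i).
Proof.
move=> internal_v some_s0.
have [hv_corner lab_corner _ _] := corner_frame internal_v some_s0.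
have corner_inj : injective (corner s0).
  by move=> i j /(congr1 (@lab N)); rewrite !lab_corner.
have [_ [/(_ v internal_v) [deg3 _] _]] := HN.
rewrite sum_ord3; apply: (sum_over_three (P := [pred h | hv h == v])) => //.
  by rewrite /= !inE !(inj_eq corner_inj).
by move=> h; rewrite !inE => /or3P[] /eqP ->; rewrite hv_corner.
Qed.

(* Face weights are balanced at internal vertices: going around v, each face
   corner is entered along one flag and left along the next. *)
Lemma face_divergence_free (f : nF N) (v : nV N) :
  ~~ isb v -> divergence (fexp f) v = 0.
Proof.
move=> internal_v; have [s0 some_s0 _] := special_flag_spec internal_v.
have [hv_corner _ closing _] := corner_frame internal_v some_s0.
have [_ [_ [_ [corner_face _]]]] := HN.
have turn i : face (cw_side (corner s0 i)) =
              face (ccw_side (next_flag (corner s0 i))).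
  by apply: corner_face; rewrite hv_corner.
rewrite /divergence (sum_flags_at _ internal_v some_s0) sum_ord3 !fexp_flag.
by rewrite (turn i0) (turn i1) (turn i2) closing /=; ring.
Qed.

Lemma Fgen_divergence_free (p : nE N -> int) (v : nV N) :
  Fgen p -> ~~ isb v -> divergence p v = 0.
Proof.
case=> [[f ->]|[t [trail ->]]] internal_v.
  exact: face_divergence_free.
exact: trail_divergence_free.
Qed.

Lemma balance_at (p : nE N -> int) (v : nV N) (s0 : hedge N) :
  ~~ isb v -> special_flag v = Some s0 -> divergence p v = 0 ->
  p (corner s0 i0).1 = p (corner s0 i1).1 + p (corner s0 i2).1.
Proof.
move=> internal_v some_s0; have [_ _ _ [o0 o1 o2]] := corner_frame internal_v some_s0.
rewrite /divergence (sum_flags_at _ internal_v some_s0) sum_ord3 /flag_sign o0 o1 o2.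
move=> div0; apply/eqP; rewrite -subr_eq0; apply/eqP.
by case: (white v) div0 => /= div0; [rewrite -[in RHS]div0 | rewrite -oppr0 -[in RHS]div0]; ring.
Qed.

Lemma univ_br_corners (R : realFieldType) (al be : 'I_3 -> 'I_3 -> R)
    (v : nV N) (s0 : hedge N) (i j : 'I_3) :
  antisym al -> antisym be -> ~~ isb v -> special_flag v = Some s0 ->
  univ_br al be (corner s0 i) (corner s0 j) = (if white v then al else be) i j.
Proof.
move=> Aal Abe internal_v some_s0.
have [hv_corner lab_corner _ _] := corner_frame internal_v some_s0.
rewrite /univ_br !hv_corner eqxx internal_v !lab_corner /=.
have [<-|ne_ij] := eqVneq i j.
  by rewrite eqxx; case: (white v); rewrite antisym_diag.
suff -> : corner s0 i != corner s0 j by [].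
by apply: contra ne_ij => /eqP /(congr1 (@lab N)); rewrite !lab_corner => ->.
Qed.

(* The universal bracket only couples flags at a common vertex, so the
   pushforward bracket is a sum of local contributions. *)
Lemma brN_local (R : realFieldType) (al be : 'I_3 -> 'I_3 -> R)
    (a b : nE N -> int) :
  brN al be a b = \sum_(v : nV N) \sum_(h | hv h == v) \sum_(h' | hv h' == v)
                    (a h.1 * b h'.1)%:~R * univ_br al be h h'.
Proof.
rewrite /brN /mon_br /pull (partition_big (@hv N) xpredT) //=.
apply: eq_bigr => v _; apply: eq_bigr => h /eqP hv_h.
rewrite [RHS]big_mkcond; apply: eq_bigr => h' _.
by case: ifPn => // hv_h'; rewrite /univ_br hv_h eq_sym (negbTE hv_h') mulr0.
Qed.

(* The 2x2 minor of the exponents of two monomials on the x^2- and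
   x^3-edges of v: the coefficient of the vertex parameter at v. *)
Definition wedge (a b : nE N -> int) (v : nV N) : int :=
  if special_flag v is Some s0 then
    a (corner s0 i1).1 * b (corner s0 i2).1 - a (corner s0 i2).1 * b (corner s0 i1).1
  else 0.

Lemma brN_vertex_sum (R : realFieldType) (al be : 'I_3 -> 'I_3 -> R)
    (a b : nE N -> int) :
  antisym al -> antisym be ->
  (forall v, ~~ isb v -> divergence a v = 0) ->
  (forall v, ~~ isb v -> divergence b v = 0) ->
  brN al be a b = \sum_(v : nV N)
    (if isb v then 0 else (wedge a b v)%:~R * agg (if white v then al else be)).
Proof.
move=> Aal Abe div_a div_b; rewrite brN_local; apply: eq_bigr => v _.
case: ifPn => [boundary_v | internal_v].
  rewrite big1 // => h /eqP hv_h; rewrite big1 // => h' _.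
  by rewrite /univ_br hv_h boundary_v andbF mulr0.
have [s0 some_s0 _] := special_flag_spec internal_v.
rewrite (sum_flags_at _ internal_v some_s0).
under eq_bigr => i _ do rewrite (sum_flags_at _ internal_v some_s0).
under eq_bigr => i _ do under eq_bigr => j _ do
  rewrite (univ_br_corners _ _ Aal Abe internal_v some_s0) intrM.
rewrite balanced_contraction.
- by rewrite /wedge some_s0 intrB !intrM.
- by case: (white v).
- by rewrite (balance_at internal_v some_s0 (div_a v internal_v)) intrD.
- by rewrite (balance_at internal_v some_s0 (div_b v internal_v)) intrD.
Qed.

End PerfectNetwork.

Theorem theorem3p2 (R : realFieldType) (N : network) :
  perfect_annular N ->
  (forall al be : 'I_3 -> 'I_3 -> R, antisym al -> antisym be ->
     forall a b : nE N -> int,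
       gauge_inv (wmon (R:=R) a) -> gauge_inv (wmon (R:=R) b) ->
       gauge_inv (fun w => brN al be a b * (wmon a w * wmon b w))) /\
  (forall p q : nE N -> int, Fgen p -> Fgen q ->
     exists c1 c2 : R,
       forall al be : 'I_3 -> 'I_3 -> R, antisym al -> antisym be ->
         brN al be p q = c1 * agg al + c2 * agg be).
Proof.
move=> HN; split.
  (* the bracket of two monomials is a constant multiple of their product *)
  move=> al be _ _ a b inv_a inv_b phi w phi_nz phi_b w_nz.
  by rewrite (inv_a phi w) // (inv_b phi w).
move=> p q gen_p gen_q.
exists (\sum_(v | ~~ isb v && white v) (wedge p q v)%:~R),
       (\sum_(v | ~~ isb v && ~~ white v) (wedge p q v)%:~R).
move=> al be Aal Abe.
rewrite (brN_vertex_sum HN Aal Abe (fun v => Fgen_divergence_free HN (v := v) gen_p)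
                                   (fun v => Fgen_divergence_free HN (v := v) gen_q)).
rewrite !mulr_suml [in RHS]big_mkcond [X in _ + X]big_mkcond -big_split /=.
by apply: eq_bigr => v _; case: (isb v); case: (white v); rewrite /= ?add0r ?addr0.
Qed.
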